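(* Let $n$ be a positive odd integer. Then $$ \sum_{k=0}^{n-1}\frac{(aq;q^2)_k\,(q/a;q^2)_k}{(q^2;q^2)_k^2} \equiv (-1)^{(n-1)/2}q^{(1-n^2)/4}\pmod{(1-aq^n)(a-q^n)}. $$
   Context: $a,q$ are indeterminates. The $q$-shifted factorial is $(y;q)_0=1$ and $(y;q)_m=(1-y)(1-yq)\cdots(1-yq^{m-1})$ for $m\geqslant1$. For rational functions $A,B$ and a polynomial $P$, $A\equiv B\pmod P$ means $A-B=P\cdot C/D$ for polynomials $C,D$ with $D$ coprime to $P$. *)

From HB Require Import structures.
From mathcomp Require Import all_boot all_order all_algebra.
Set Implicit Arguments. Unset Strict Implicit. Unset Printing Implicit Defensive.
Import Order.TTheory GRing.Theory Num.Theory.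
Local Open Scope ring_scope.

(* Bivariate polynomial ring Q[a,q], represented as {poly {poly rat}}:
   outer variable = a, inner variable = q. *)
Definition Rpol := {poly {poly rat}}.
Definition Rfrac := {fraction {poly {poly rat}}}.

Definition embF (x : Rpol) : Rfrac := @FracField.tofrac _ x.

Definition var_a : Rpol := 'X.
Definition var_q : Rpol := ('X)%:P.
Definition fa : Rfrac := embF var_a.
Definition fq : Rfrac := embF var_q.

Definition qpoch (y p : Rfrac) (m : nat) : Rfrac :=
  \prod_(i < m) (1 - y * p ^+ i).

Definition pdivides (g P : Rpol) : Prop := exists h : Rpol, P = g * h.
Definition pcoprime (P D : Rpol) : Prop :=
  forall g : Rpol, pdivides g P -> pdivides g D -> g \is a GRing.unit.

Definition congr_mod (A B : Rfrac) (P : Rpol) : Prop :=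
  exists C D : Rpol, D != 0 /\ pcoprime P D /\
    A - B = embF P * embF C / embF D.

From HB Require Import structures.
From mathcomp Require Import all_boot all_order all_algebra.
From mathcomp Require Import ring zify.
Set Implicit Arguments. Unset Strict Implicit. Unset Printing Implicit Defensive.
Import GRing.Theory.
Local Open Scope ring_scope.

(* Put [n = 2m+1] and [p = q^2].  Specializing [a = q^n] turns the k-th term
   into [(p^(m+1);p)_k (p^-m;p)_k / (p;p)_k^2]; these terms vanish for [k > m]
   and their sum is [(-1)^m p^(-m(m+1)/2)], by induction on [m]: the terms for
   [m] and [m+1] are tied by a telescoping (Gosper-type) identity.  On the
   other hand, multiplying the k-th numerator factor by [a q^n] makes it a
   polynomial, and exchanging [a] with [q^n] changes it by a multiple of
   [(1 - a q^n)(a - q^n)]; so each term is congruent to its specialization,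
   with a denominator [c(q) a^j] coprime to the modulus. *)

Lemma mulKdivf (F : fieldType) (c x y : F) : c != 0 -> c * x / (c * y) = x / y.
Proof. by move=> c0; rewrite invfM mulrACA mulfV ?mul1r. Qed.

Lemma divB_scaled (F : fieldType) (Y A B Q u v : F) :
  Y != 0 -> Y * A = u -> Y * B = v -> A / Q - B / Q = (u - v) / (Y * Q).
Proof. by move=> Y0 <- <-; rewrite -mulrBr mulKdivf // mulrBl. Qed.

Lemma mul_factor_pair (F : fieldType) (y q x c : F) : y != 0 ->
  c * (1 - y * q * x) * (y - q * x) = y * c * ((1 - y * q * x) * (1 - q / y * x)).
Proof. by move=> y0; field. Qed.

Lemma prod_sub_multiple (R : comNzRingType) (P : R) (k : nat) (u w : nat -> R) :
  (forall i, exists c, u i - w i = P * c) ->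
  exists C, \prod_(i < k) u i - \prod_(i < k) w i = P * C.
Proof.
move=> uw; elim: k => [|k [C IH]]; first by exists 0; rewrite !big_ord0 subrr mulr0.
have [c Hc] := uw k.
exists (C * u k + \prod_(i < k) w i * c); rewrite !big_ord_recr /=.
rewrite -[\prod_(i < k) u i](subrK (\prod_(i < k) w i)) IH.
rewrite -[u k](subrK (w k)) Hc; ring.
Qed.

Section QPochhammer.
Variable F : fieldType.

(* At [F := Rfrac] this is [qpoch], by conversion. *)
Definition qpochhammer (y p : F) (m : nat) : F := \prod_(i < m) (1 - y * p ^+ i).

Lemma qpochhammer0 y p : qpochhammer y p 0 = 1.
Proof. by rewrite /qpochhammer big_ord0. Qed.

Lemma qpochhammerS y p k :
  qpochhammer y p k.+1 = qpochhammer y p k * (1 - y * p ^+ k).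
Proof. by rewrite /qpochhammer big_ord_recr. Qed.

Lemma qpochhammerSl y p k :
  qpochhammer y p k.+1 = (1 - y) * qpochhammer (y * p) p k.
Proof.
rewrite /qpochhammer big_ord_recl expr0 mulr1; congr (_ * _).
by apply: eq_bigr => i _; rewrite exprS mulrA.
Qed.

Lemma qpochhammer_invX_eq0 p m k :
  p != 0 -> (m < k)%N -> qpochhammer (p ^+ m)^-1 p k = 0.
Proof.
move=> p0 mk; rewrite /qpochhammer (bigD1 (Ordinal mk)) //=.
by rewrite mulVf ?subrr ?mul0r // expf_neq0.
Qed.

Lemma prod_scaled_qpochhammer_pair (c y q p : F) (k : nat) :
  \prod_(i < k) (c * ((1 - y * q * p ^+ i) * (1 - q / y * p ^+ i))) =
  c ^+ k * (qpochhammer (y * q) p k * qpochhammer (q / y) p k).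
Proof. by rewrite big_split prodr_const card_ord -big_split. Qed.

Variable p : F.
Hypothesis p_neq0 : p != 0.
Hypothesis one_sub_pX_neq0 : forall j, (0 < j)%N -> 1 - p ^+ j != 0.

Lemma qpochhammer_pp_neq0 k : qpochhammer p p k != 0.
Proof.
rewrite /qpochhammer prodf_seq_neq0; apply/allP => i _ /=.
by rewrite -exprS one_sub_pX_neq0.
Qed.

Definition qterm m k :=
  qpochhammer (p ^+ m.+1) p k * qpochhammer (p ^+ m)^-1 p k
    / qpochhammer p p k ^+ 2.

Definition qterm_antidiff m k :=
  if k is k'.+1 then
    qpochhammer (p ^+ m.+1) p k * qpochhammer (p ^+ m)^-1 p k'
      / qpochhammer p p k' ^+ 2
  else 0.

Lemma qterm_recurrence m k :
  - p ^+ m.+1 * qterm m.+1 k - qterm m k =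
  - (1 + p ^+ m.+1) / (1 - p ^+ m.+1) *
    (qterm_antidiff m k.+1 - qterm_antidiff m k).
Proof.
have pm_neq0 : p ^+ m != 0 by rewrite expf_neq0.
have pm1 : 1 - p ^+ m.+1 != 0 by rewrite one_sub_pX_neq0.
rewrite /qterm /qterm_antidiff; case: k => [|k].
  rewrite !qpochhammer0 qpochhammerS qpochhammer0 expr0 !mulr1 expr1n !divr1.
  by rewrite !mul1r subr0; field.
have pk1 : 1 - p ^+ k.+1 != 0 by rewrite one_sub_pX_neq0.
have Ek1 := qpochhammer_pp_neq0 k.
have shift_up : qpochhammer (p ^+ m.+2) p k.+1 =
    qpochhammer (p ^+ m.+1) p k * (1 - p ^+ m.+1 * p ^+ k)
      * (1 - p ^+ m.+1 * p ^+ k.+1) / (1 - p ^+ m.+1).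
  by rewrite -!qpochhammerS (qpochhammerSl (p ^+ m.+1)) -exprSr; field.
have shift_down : qpochhammer (p ^+ m.+1)^-1 p k.+1 =
    (1 - (p ^+ m.+1)^-1) * qpochhammer (p ^+ m)^-1 p k.
  by rewrite qpochhammerSl exprS invfM mulrAC mulVf // mul1r.
rewrite shift_up shift_down !qpochhammerS !exprS; field.
by rewrite -!exprS Ek1 pm1 pk1 pm_neq0 p_neq0.
Qed.

Lemma sum_qterm_succ m K : (m.+1 < K)%N ->
  \sum_(k < K) qterm m.+1 k = - (p ^+ m.+1)^-1 * \sum_(k < K) qterm m k.
Proof.
move=> mK.
have pm_neq0 : p ^+ m.+1 != 0 by rewrite expf_neq0.
have telescoped : \sum_(k < K) (- p ^+ m.+1 * qterm m.+1 k - qterm m k) = 0.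
  under eq_bigr do rewrite qterm_recurrence.
  rewrite -mulr_sumr.
  rewrite -(big_mkord xpredT (fun k => qterm_antidiff m k.+1 - qterm_antidiff m k)).
  rewrite telescope_sumr // /qterm_antidiff.
  case: K mK => // K mK.
  by rewrite qpochhammer_invX_eq0 // mulr0 mul0r subr0 mulr0.
move/eqP: telescoped; rewrite sumrB -mulr_sumr subr_eq0 => /eqP <-.
by rewrite mulrA mulrNN mulVf ?mul1r.
Qed.

Lemma sum_qterm m K : (m < K)%N ->
  \sum_(k < K) qterm m k = (-1) ^+ m / p ^+ 'C(m.+1, 2).
Proof.
elim: m => [|m IH] mK.
  case: K mK => // K _.
  rewrite big_ord_recl big1 => [|i _]; last first.
    by rewrite /qterm qpochhammer_invX_eq0 // mulr0 mul0r.
  by rewrite /qterm !qpochhammer0 expr1n !divr1 mulr1 addr0.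
have -> : 'C(m.+2, 2) = ('C(m.+1, 2) + m.+1)%N by rewrite binS bin1.
rewrite sum_qterm_succ // IH 1?ltnW // exprD [(-1) ^+ m.+1]exprS invfM; ring.
Qed.

End QPochhammer.

Lemma divisor_CXn (R : idomainType) (m : nat) (g h : {poly R}) (c : R) :
  c != 0 -> g * h = c%:P * 'X^m -> exists l d, g = d%:P * 'X^l.
Proof.
elim: m g h => [|m IH] g h c0 E.
  have /andP [g0 h0] : (g != 0) && (h != 0).
    by rewrite -negb_or -mulf_eq0 E expr0 mulr1 polyC_eq0.
  have := size_mul g0 h0; rewrite E expr0 mulr1 size_polyC c0 => S.
  exists 0%N, g`_0; rewrite expr0 mulr1; apply: size1_polyC.
  have : (0 < size h)%N by rewrite size_poly_gt0.
  lia.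
have : g`_0 * h`_0 = 0 by rewrite -coef0M E coefCM exprSr coefMX mulr0.
move/eqP; rewrite mulf_eq0 => /orP [] /eqP z.
  have /factor_theorem [g' Eg] : root g 0 by rewrite /root horner_coef0 z.
  rewrite subr0 in Eg.
  have : g' * h * 'X = c%:P * 'X^m * 'X by rewrite mulrAC -Eg E exprSr mulrA.
  move/(mulIf (negbT (polyX_eq0 R))) => /(IH _ _ c0) [l [d Eg']].
  by exists l.+1, d; rewrite Eg Eg' exprSr mulrA.
have /factor_theorem [h' Eh] : root h 0 by rewrite /root horner_coef0 z.
rewrite subr0 in Eh.
have : g * h' * 'X = c%:P * 'X^m * 'X by rewrite -mulrA -Eh E exprSr mulrA.
by move/(mulIf (negbT (polyX_eq0 R))) => /(IH _ _ c0).
Qed.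

Lemma divisor_CXn_polyC (R : idomainType) (m : nat) (g h k : {poly R}) (c : R) :
  c != 0 -> g * h = c%:P * 'X^m -> (g * k)`_0 != 0 -> exists d, g = d%:P.
Proof.
move=> c0 /(divisor_CXn c0) [[|l] [d ->]] gk0; first by exists d; rewrite mulr1.
by move: gk0; rewrite coef0M coefCM coefXn mulr0 mul0r eqxx.
Qed.

Definition modulus (n : nat) : Rpol := (1 - var_a * var_q ^+ n) * (var_a - var_q ^+ n).

Lemma modulus_expand n :
  modulus n = (- 'X^n)%:P + (1 + 'X^(n.*2))%:P * 'X + (- 'X^n : {poly rat})%:P * 'X^2.
Proof.
rewrite /modulus /var_a /var_q -muln2 exprM polyCN polyCD polyC1 -!rmorphXn /=.
ring.
Qed.

Lemma modulus_coef0 n : (modulus n)`_0 = - 'X^n.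
Proof. by rewrite modulus_expand !coefD coefC coefMX coefMXn /= !addr0. Qed.

Lemma modulus_coef1 n : (modulus n)`_1 = 1 + 'X^(n.*2).
Proof. by rewrite modulus_expand !coefD coefC coefMX coefMXn /= coefC add0r addr0. Qed.

Definition monomial_in_a (D : Rpol) :=
  exists (j : nat) (c : {poly rat}), c != 0 /\ D = c%:P * 'X^j.

(* A common divisor of [modulus n] and [c(q) a^j] is first a polynomial in [q]
   alone, since [a] does not divide [modulus n]; it then divides both [-q^n] and
   [1 + q^(2n)], hence is a constant. *)
Lemma coprime_modulus_monomial n D :
  (0 < n)%N -> monomial_in_a D -> pcoprime (modulus n) D.
Proof.
move=> n0 [j [c [c0 ->]]] g [h2 Eh2] [h1 Eh1].
have Xn0 : ('X^n : {poly rat}) != 0 by rewrite expf_neq0 ?polyX_eq0.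
have [d Eg] : exists d, g = d%:P.
  apply: (divisor_CXn_polyC (h := h1) (k := h2) c0); first by rewrite -Eh1.
  by rewrite -Eh2 modulus_coef0 oppr_eq0.
have [e Ed] : exists e, d = e%:P.
  apply: (divisor_CXn_polyC (h := h2`_0) (k := h2`_1) (c := -1) (m := n)).
  - by rewrite oppr_eq0 oner_eq0.
  - by rewrite -coefCM -Eg -Eh2 modulus_coef0 polyCN polyC1 mulN1r.
  - rewrite -coefCM -Eg -Eh2 modulus_coef1 coefD coef1 coefXn.
    have -> : (0 == n.*2)%N = false by rewrite eq_sym double_eq0; case: n n0 {Eh2 Xn0}.
    by rewrite addr0 oner_eq0.
have e0 : e != 0.
  apply: contraNneq Xn0 => e0; move: (modulus_coef0 n).
  by rewrite Eh2 Eg Ed e0 mul0r coef0 => /eqP; rewrite eq_sym oppr_eq0.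
by rewrite Eg Ed !poly_unitE !size_polyC !coefC polyC_eq0 e0 size_polyC e0 unitfE.
Qed.

Lemma monomial_in_a_mul D E :
  monomial_in_a D -> monomial_in_a E -> monomial_in_a (D * E).
Proof.
move=> [j [c [c0 ->]]] [l [d [d0 ->]]]; exists (j + l)%N, (c * d).
by rewrite mulf_neq0 // polyCM exprD; split=> //; ring.
Qed.

Lemma monomial_in_a_polyC (c : {poly rat}) : c != 0 -> monomial_in_a c%:P.
Proof. by move=> c0; exists 0%N, c; rewrite expr0 mulr1. Qed.

Lemma monomial_in_a1 : monomial_in_a 1.
Proof. by rewrite -polyC1; apply: monomial_in_a_polyC; rewrite oner_eq0. Qed.

Lemma monomial_in_a_exp D k : monomial_in_a D -> monomial_in_a (D ^+ k).
Proof.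
move=> mD; elim: k => [|k IH]; first by rewrite expr0; exact: monomial_in_a1.
by rewrite exprS; apply: monomial_in_a_mul.
Qed.

Lemma monomial_in_a_neq0 D : monomial_in_a D -> D != 0.
Proof.
by move=> [j [c [c0 ->]]]; rewrite mulf_neq0 ?polyC_eq0 // expf_neq0 ?polyX_eq0.
Qed.

Lemma embF_eq0 x : (embF x == 0) = (x == 0).
Proof. exact: tofrac_eq0. Qed.

Lemma embFD x y : embF (x + y) = embF x + embF y.
Proof. exact: rmorphD. Qed.

Lemma embFB x y : embF (x - y) = embF x - embF y.
Proof. exact: rmorphB. Qed.

Lemma embFM x y : embF (x * y) = embF x * embF y.
Proof. exact: rmorphM. Qed.

Lemma embF1 : embF 1 = 1.
Proof. exact: rmorph1. Qed.

Lemma embFX x k : embF (x ^+ k) = embF x ^+ k.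
Proof. exact: rmorphXn. Qed.

Lemma embF_prod (I : finType) (f : I -> Rpol) :
  embF (\prod_i f i) = \prod_i embF (f i).
Proof. exact: rmorph_prod. Qed.

Section CongruenceWithMonomialDenominators.
Variable n : nat.

(* [congr_mod] restricted to denominators [c(q) a^j]; unlike [congr_mod]
   it is closed under addition. *)
Definition mcongr (A B : Rfrac) :=
  exists C D, monomial_in_a D /\ A - B = embF (modulus n) * embF C / embF D.

Lemma mcongrD A1 B1 A2 B2 :
  mcongr A1 B1 -> mcongr A2 B2 -> mcongr (A1 + A2) (B1 + B2).
Proof.
move=> [C1 [D1 [mD1 E1]]] [C2 [D2 [mD2 E2]]].
exists (C1 * D2 + C2 * D1), (D1 * D2); split; first exact: monomial_in_a_mul.
have [D10 D20] := (monomial_in_a_neq0 mD1, monomial_in_a_neq0 mD2).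
rewrite opprD addrACA E1 E2 addf_div ?embF_eq0 // embFD !embFM.
by rewrite mulrDr !mulrA.
Qed.

Lemma mcongr_sum (I : Type) (r : seq I) (P : pred I) (F G : I -> Rfrac) :
  (forall i, P i -> mcongr (F i) (G i)) ->
  mcongr (\sum_(i <- r | P i) F i) (\sum_(i <- r | P i) G i).
Proof.
apply: big_ind2 => [|A1 B1 A2 B2]; last exact: mcongrD.
exists 0, 1; split; first exact: monomial_in_a1.
by rewrite subrr [embF 0]rmorph0 mulr0 mul0r.
Qed.

Lemma mcongr_congr_mod A B : (0 < n)%N -> mcongr A B -> congr_mod A B (modulus n).
Proof.
move=> n0 [C [D [mD E]]]; exists C, D.
by rewrite monomial_in_a_neq0 //; split=> //; split=> //; exact: coprime_modulus_monomial.
Qed.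

End CongruenceWithMonomialDenominators.

Lemma one_sub_Xn_neq0 (j : nat) : (0 < j)%N -> 1 - 'X^j != 0 :> {poly rat}.
Proof.
move=> j0; apply/eqP => /(congr1 (fun p : {poly rat} => p`_0)).
by rewrite coefB coef1 coefXn (ltn_eqF j0) subr0 coef0 => /eqP; rewrite oner_eq0.
Qed.

Lemma fa_neq0 : fa != 0.
Proof. by rewrite embF_eq0 polyX_eq0. Qed.

Lemma fq_neq0 : fq != 0.
Proof. by rewrite embF_eq0 polyC_eq0 polyX_eq0. Qed.

Lemma one_sub_fqX_neq0 j : (0 < j)%N -> 1 - fq ^+ j != 0.
Proof.
move=> j0; rewrite -embFX -embF1 -embFB embF_eq0 /var_q -rmorphXn -polyCB.
by rewrite polyC_eq0 one_sub_Xn_neq0.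
Qed.

(* [num_factor var_a (var_q ^+ n) i] is [a q^n] times the i-th factor
   [(1 - a q^(2i+1)) (1 - q^(2i+1) / a)] of the numerator; exchanging the
   roles of [a] and [q^n] specializes it to [a = q^n]. *)
Definition num_factor (y c : Rpol) (i : nat) : Rpol :=
  c * (1 - y * var_q * (var_q ^+ 2) ^+ i) * (y - var_q * (var_q ^+ 2) ^+ i).

Lemma num_factor_swap_sub n i :
  num_factor var_a (var_q ^+ n) i - num_factor (var_q ^+ n) var_a i =
  modulus n * (var_q * (var_q ^+ 2) ^+ i).
Proof. rewrite /num_factor /modulus; ring. Qed.

Lemma embF_prod_num_factor y c k : embF y != 0 ->
  embF (\prod_(i < k) num_factor y c i) = (embF y * embF c) ^+ k *
    (qpochhammer (embF y * fq) (fq ^+ 2) k * qpochhammer (fq / embF y) (fq ^+ 2) k).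
Proof.
move=> y0; rewrite embF_prod.
under eq_bigr do rewrite /num_factor !embFM !embFB !embFM embF1 !embFX mul_factor_pair //.
exact: prod_scaled_qpochhammer_pair.
Qed.

Definition qpoch_q2_poly (k : nat) : Rpol :=
  \prod_(i < k) (1 - var_q ^+ 2 * (var_q ^+ 2) ^+ i).

Lemma embF_qpoch_q2_poly k : embF (qpoch_q2_poly k) = qpoch (fq ^+ 2) (fq ^+ 2) k.
Proof.
rewrite /qpoch_q2_poly embF_prod; apply: eq_bigr => i _.
by rewrite embFB embF1 embFM !embFX.
Qed.

Lemma monomial_in_a_qpoch_q2_poly k : monomial_in_a (qpoch_q2_poly k).
Proof.
apply: big_ind => [||i _]; [exact: monomial_in_a1 | exact: monomial_in_a_mul |].
rewrite /var_q -!rmorphXn -rmorphM -polyC1 -rmorphB -exprS -exprM.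
by apply: monomial_in_a_polyC; rewrite one_sub_Xn_neq0 // muln_gt0.
Qed.

Lemma mcongr_num_factor_swap n y c Q k :
  embF y != 0 -> embF c != 0 -> monomial_in_a ((y * c) ^+ k * Q) ->
  (forall i, exists C, num_factor y c i - num_factor c y i = modulus n * C) ->
  mcongr n
    (qpochhammer (embF y * fq) (fq ^+ 2) k * qpochhammer (fq / embF y) (fq ^+ 2) k
       / embF Q)
    (qpochhammer (embF c * fq) (fq ^+ 2) k * qpochhammer (fq / embF c) (fq ^+ 2) k
       / embF Q).
Proof.
(* Rewrites in [Rfrac] are kept fully instantiated, and no goal there is left
   to [done]: unifying or deciding fractions up to conversion makes Rocq
   evaluate polynomial arithmetic, which does not terminate in practice. *)
move=> y0 c0 mD swap; have [C EC] := prod_sub_multiple k swap.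
exists C, ((y * c) ^+ k * Q); split; first exact: mD.
have Y0 := expf_neq0 k (mulf_neq0 y0 c0).
have Ev : (embF y * embF c) ^+ k *
    (qpochhammer (embF c * fq) (fq ^+ 2) k * qpochhammer (fq / embF c) (fq ^+ 2) k) =
    embF (\prod_(i < k) num_factor c y i).
  by rewrite (embF_prod_num_factor y k c0) (mulrC (embF c) (embF y)).
have Eu := esym (embF_prod_num_factor c k y0).
apply: etrans (@divB_scaled _ _ _ _ (embF Q) _ _ Y0 Eu Ev) _.
by rewrite -embFB EC (embFM (modulus n) C) (embFM _ Q) (embFX (y * c)) (embFM y c).
Qed.

Lemma monomial_in_a_term_den n k :
  monomial_in_a ((var_a * var_q ^+ n) ^+ k * qpoch_q2_poly k ^+ 2).
Proof.
apply: monomial_in_a_mul; apply: monomial_in_a_exp;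
  last exact: monomial_in_a_qpoch_q2_poly.
apply: monomial_in_a_mul; first by exists 1%N, 1; rewrite oner_eq0 mul1r.
by rewrite /var_q -rmorphXn; apply: monomial_in_a_polyC; rewrite expf_neq0 ?polyX_eq0.
Qed.

Lemma mcongr_term m k :
  mcongr m.*2.+1
    (qpoch (fa * fq) (fq ^+ 2) k * qpoch (fq / fa) (fq ^+ 2) k
       / qpoch (fq ^+ 2) (fq ^+ 2) k ^+ 2)
    (qterm (fq ^+ 2) m k).
Proof.
have qn0 : embF (var_q ^+ m.*2.+1) != 0.
  by rewrite embFX; apply: expf_neq0; exact: fq_neq0.
have qnq : fq ^+ m.*2.+1 * fq = (fq ^+ 2) ^+ m.+1 by rewrite -exprSr -exprM mul2n.
have q_qn : fq / fq ^+ m.*2.+1 = ((fq ^+ 2) ^+ m)^-1.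
  by rewrite exprS -exprM mul2n invfM mulrA (mulfV fq_neq0) mul1r.
have := @mcongr_num_factor_swap m.*2.+1 var_a (var_q ^+ m.*2.+1)
  (qpoch_q2_poly k ^+ 2) k fa_neq0 qn0 (monomial_in_a_term_den m.*2.+1 k)
  (fun i => ex_intro _ _ (num_factor_swap_sub m.*2.+1 i)).
rewrite (embFX var_q m.*2.+1) (embFX (qpoch_q2_poly k)) embF_qpoch_q2_poly qnq q_qn.
exact.
Qed.

Lemma square_odd_pred_div4 m : (((m.*2.+1) ^ 2).-1 %/ 4 = 'C(m.+1, 2).*2)%N.
Proof.
have even_prod : odd (m.+1 * m) = false by rewrite oddM /= andNb.
rewrite bin2 /= halfK even_prod subn0; lia.
Qed.

Theorem theorem1p7 (n : nat) (hn : odd n) :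
  congr_mod
    (\sum_(k < n)
        (qpoch (fa * fq) (fq ^+ 2) k * qpoch (fq / fa) (fq ^+ 2) k)
          / (qpoch (fq ^+ 2) (fq ^+ 2) k) ^+ 2)
    ((-1) ^+ n.-1./2 * (fq ^+ ((n ^ 2).-1 %/ 4))^-1)
    ((1 - var_a * var_q ^+ n) * (var_a - var_q ^+ n)).
Proof.
have [m ->] : exists m, n = m.*2.+1.
  by exists n./2; rewrite -{1}(odd_double_half n) hn.
rewrite square_odd_pred_div4 /= doubleK.
have p_neq0 : fq ^+ 2 != 0 := expf_neq0 2 fq_neq0.
have one_sub_pX_neq0 j : (0 < j)%N -> 1 - (fq ^+ 2) ^+ j != 0.
  by move=> j0; rewrite -exprM one_sub_fqX_neq0 // muln_gt0.
have -> : fq ^+ 'C(m.+1, 2).*2 = (fq ^+ 2) ^+ 'C(m.+1, 2) by rewrite -exprM mul2n.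
have mK : (m < m.*2.+1)%N by rewrite ltnS -addnn leq_addr.
rewrite -(sum_qterm p_neq0 one_sub_pX_neq0 mK).
apply: (mcongr_congr_mod (ltn0Sn _)).
by apply: mcongr_sum => k _; exact: mcongr_term.
Qed.
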